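(* The axiom system $EL_{int}$ is complete with respect to the class of all topo-models: for every formula $\varphi\in\mathcal{L}_{EL_{int}}$, if $\varphi$ is valid in every topo-model, then $\varphi$ is a theorem of $EL_{int}$.
   Context: Fix a countable set $\mathit{Prop}$ of propositional variables and a finite non-empty set $\mathcal{A}$ of agents. The language $\mathcal{L}_{EL_{int}}$ is given by $\varphi ::= p \mid \neg\varphi \mid \varphi\wedge\varphi \mid K_i\varphi \mid \mathrm{int}(\varphi)$ with $p\in\mathit{Prop}$, $i\in\mathcal{A}$; $\vee,\rightarrow,\leftrightarrow$ are the usual abbreviations, $\bot := p\wedge\neg p$, $\hat K_i\varphi:=\neg K_i\neg\varphi$. Topo-models: Let $(X,\tau)$ be a topological space and write $\mathrm{Int}(A)$ for the topological interior of $A\subseteq X$. A neighbourhood function set $\Phi$ on $(X,\tau)$ is a set of partial functions $\theta$ from $X$ to the set of functions $\mathcal{A}\to\tau$ such that for all $x,y\in Dom(\theta)$, all $i\in\mathcal{A}$ and all $U\in\tau$: (1) $\theta(x)(i)\in\tau$; (2) $x\in\theta(x)(i)$; (3) $\theta(x)(i)\subseteq Dom(\theta)$; (4) if $y\in\theta(x)(i)$ then $\theta(x)(i)=\theta(y)(i)$; (5) $\theta|_U\in\Phi$, where $\theta|_U$ is the partial function with $Dom(\theta|_U)=Dom(\theta)\cap U$ and $\theta|_U(x)(i)=\theta(x)(i)\cap U$. A topo-model is $\mathcal{M}=(X,\tau,\Phi,V)$ with $(X,\tau)$ a topological space, $\Phi$ a neighbourhood function set on it, and $V$ assigning to each $p\in\mathit{Prop}$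 a subset of $X$. A neighbourhood situation is a pair $(x,\theta)$ with $\theta\in\Phi$, $x\in Dom(\theta)$. Semantics: $(x,\theta)\models p$ iff $x\in V(p)$; Boolean clauses as usual; $(x,\theta)\models K_i\varphi$ iff $(y,\theta)\models\varphi$ for all $y\in\theta(x)(i)$; $(x,\theta)\models\mathrm{int}(\varphi)$ iff $x\in\mathrm{Int}([\![\varphi]\!]^\theta)$, where $[\![\varphi]\!]^\theta=\{y\in Dom(\theta)\mid (y,\theta)\models\varphi\}$. $\varphi$ is valid in $\mathcal{M}$ if it is true at every neighbourhood situation of $\mathcal{M}$. The axiom system $EL_{int}$ has axioms: all instances of propositional tautologies; $K_i(\varphi\to\psi)\to(K_i\varphi\to K_i\psi)$; $K_i\varphi\to\varphi$; $K_i\varphi\to K_iK_i\varphi$; $\neg K_i\varphi\to K_i\neg K_i\varphi$; $\mathrm{int}(\varphi\to\psi)\to(\mathrm{int}(\varphi)\to\mathrm{int}(\psi))$; $\mathrm{int}(\varphi)\to\varphi$; $\mathrm{int}(\varphi)\to\mathrm{int}(\mathrm{int}(\varphi))$; $K_i\varphi\to\mathrm{int}(\varphi)$; and rules: modus ponens, from $\varphi$ infer $K_i\varphi$, from $\varphi$ infer $\mathrm{int}(\varphi)$. Theorems are the members of the smallest set containing the axioms and closed under the rules. *)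

From Stdlib Require Import List Bool.
Set Implicit Arguments.

Inductive form (Ag : Type) : Type :=
| Var : nat -> form Ag
| Neg : form Ag -> form Ag
| Conj : form Ag -> form Ag -> form Ag
| K : Ag -> form Ag -> form Ag
| Int : form Ag -> form Ag.

Arguments Var {Ag} _.

Definition Imp {Ag} (a b : form Ag) : form Ag := Neg (Conj a (Neg b)).

(* A formula is an instance of a propositional tautology iff it is true under
   every Boolean valuation of its maximal non-Boolean subformulas
   (variables, K_i psi, int psi). *)
Fixpoint beval {Ag} (v : form Ag -> bool) (f : form Ag) : bool :=
  match f with
  | Neg a => negb (beval v a)
  | Conj a b => beval v a && beval v b
  | _ => v f
  end.

Definition taut {Ag} (f : form Ag) : Prop := forall v, beval v f = true.

Inductive thm {Ag : Type} : form Ag -> Prop :=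
| ax_taut f : taut f -> thm f
| ax_K i a b : thm (Imp (K i (Imp a b)) (Imp (K i a) (K i b)))
| ax_T i a : thm (Imp (K i a) a)
| ax_4 i a : thm (Imp (K i a) (K i (K i a)))
| ax_5 i a : thm (Imp (Neg (K i a)) (K i (Neg (K i a))))
| ax_intK a b : thm (Imp (Int (Imp a b)) (Imp (Int a) (Int b)))
| ax_intT a : thm (Imp (Int a) a)
| ax_int4 a : thm (Imp (Int a) (Int (Int a)))
| ax_Kint i a : thm (Imp (K i a) (Int a))
| r_mp a b : thm (Imp a b) -> thm a -> thm b
| r_necK i a : thm a -> thm (K i a)
| r_necInt a : thm a -> thm (Int a).

Record topology (X : Type) := {
  opn : (X -> Prop) -> Prop;
  opn_ext : forall U V, opn U -> (forall x, U x <-> V x) -> opn V;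
  opn_full : opn (fun _ => True);
  opn_union : forall F : (X -> Prop) -> Prop,
      (forall U, F U -> opn U) -> opn (fun x => exists U, F U /\ U x);
  opn_inter : forall U V, opn U -> opn V -> opn (fun x => U x /\ V x)
}.

Definition interior {X} (t : topology X) (S : X -> Prop) (x : X) : Prop :=
  exists U, opn t U /\ U x /\ (forall y, U y -> S y).

(* A partial function theta from X to (Ag -> subsets of X), given by its
   domain and its values (values outside the domain are irrelevant). *)
Record pfun (Ag X : Type) := {
  dom : X -> Prop;
  nb : X -> Ag -> X -> Prop
}.

Definition pfeq {Ag X} (t1 t2 : pfun Ag X) : Prop :=
  (forall x, dom t1 x <-> dom t2 x) /\
  (forall x, dom t1 x -> forall i y, nb t1 x i y <-> nb t2 x i y).

Definition restrict {Ag X} (t : pfun Ag X) (U : X -> Prop) : pfun Ag X :=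
  {| dom := fun x => dom t x /\ U x;
     nb := fun x i y => nb t x i y /\ U y |}.

Definition nfs {Ag X} (tp : topology X) (Phi : pfun Ag X -> Prop) : Prop :=
  forall th, Phi th ->
    (forall x i, dom th x ->
       opn tp (nb th x i) /\
       nb th x i x /\
       (forall y, nb th x i y -> dom th y) /\
       (forall y, dom th y -> nb th x i y ->
          forall z, nb th x i z <-> nb th y i z))
    /\ (forall U, opn tp U ->
          exists th', Phi th' /\ pfeq th' (restrict th U)).

Record topo_model (Ag : Type) := {
  carrier : Type;
  top : topology carrier;
  Phi : pfun Ag carrier -> Prop;
  Phi_nfs : nfs top Phi;
  val : nat -> carrier -> Prop
}.

Fixpoint sat {Ag} (M : topo_model Ag) (th : pfun Ag (carrier M))
    (f : form Ag) : carrier M -> Prop :=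
  match f with
  | Var p => fun x => val M p x
  | Neg a => fun x => ~ sat M th a x
  | Conj a b => fun x => sat M th a x /\ sat M th b x
  | K i a => fun x => forall y, nb th x i y -> sat M th a y
  | Int a => interior (top M) (fun y => dom th y /\ sat M th a y)
  end.

Definition valid {Ag} (M : topo_model Ag) (f : form Ag) : Prop :=
  forall th x, Phi M th -> dom th x -> sat M th f x.

(* Canonical model. Worlds are maximal consistent sets; x R y iff y contains
   every a with int a in x, a preorder by the T and 4 axioms for int, and the
   open sets are the R-upsets, so that the truth lemma for int holds. The
   neighbourhood functions are the S5 equivalence classes of the K_i-relations,
   restricted to open sets U. Such a restricted class is again open because
   K_i a -> int a makes R contained in each K_i-relation. Lindenbaum's lemma
   needs an enumeration of the formulas, which exists because the agents are
   finitely many. *)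

From Stdlib Require Import List Bool Classical Cantor Lia.
Import ListNotations.
Set Implicit Arguments.

Section Valuations.
Context {Ag : Type}.
Implicit Types (a b f g : form Ag) (l : list (form Ag)).

Definition imps l f : form Ag := fold_right Imp f l.
Definition bot : form Ag := Conj (Var 0) (Neg (Var 0)).

Lemma beval_imp v a b : beval v (Imp a b) = implb (beval v a) (beval v b).
Proof. simpl. now destruct (beval v a), (beval v b). Qed.

Lemma beval_imps v l f : beval v (imps l f) = implb (forallb (beval v) l) (beval v f).
Proof.
  induction l as [|g l IH]; simpl; [now destruct (beval v f)|].
  change (beval v (Imp g (imps l f)) = implb (beval v g && forallb (beval v) l) (beval v f)).
  rewrite beval_imp, IH. now destruct (beval v g), (forallb (beval v) l), (beval v f).
Qed.

Lemma beval_bot v : beval v bot = false.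
Proof. simpl. now destruct (v (Var 0)). Qed.
End Valuations.

Ltac solve_bool :=
  intros ?v; cbn [forallb]; rewrite ?beval_imps;
  cbn [forallb map beval Imp]; rewrite ?beval_bot;
  repeat match goal with |- context [beval ?w ?a] => destruct (beval w a) end;
  repeat match goal with |- context [forallb ?p ?l] => destruct (forallb p l) end;
  simpl; intros; congruence.

Section Derivability.
Context {Ag : Type}.
Implicit Types (a b f g : form Ag) (l : list (form Ag)) (G : form Ag -> Prop).

Definition extend G a : form Ag -> Prop := fun g => G g \/ g = a.
Definition der G f : Prop := exists l, (forall g, In g l -> G g) /\ thm (imps l f).
Definition consistent G : Prop := ~ der G bot.
Definition MCS G : Prop := consistent G /\ forall f, G f \/ G (Neg f).

Lemma forallb_beval_incl v l l' :
  (forall g, In g l -> In g l') -> forallb (beval v) l' = true -> forallb (beval v) l = true.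
Proof. rewrite !forallb_forall. auto. Qed.

Lemma thm_imps_elim l f : thm (imps l f) -> (forall g, In g l -> thm g) -> thm f.
Proof.
  revert f; induction l as [|g l IH]; intros f Hf Hl; [exact Hf|].
  apply IH; [|intros h Hh; apply Hl; right; exact Hh].
  apply (r_mp Hf), Hl. left. reflexivity.
Qed.

Lemma thm_taut_conseq l f :
  (forall v, forallb (beval v) l = true -> beval v f = true) ->
  (forall g, In g l -> thm g) -> thm f.
Proof.
  intros Hv. apply thm_imps_elim, ax_taut. intro v.
  rewrite beval_imps. specialize (Hv v).
  destruct (forallb (beval v) l); [rewrite Hv|]; reflexivity.
Qed.

Lemma thm_imps_weaken l l' f :
  (forall g, In g l -> In g l') -> thm (imps l f) -> thm (imps l' f).
Proof.
  intros Hll' T. apply (thm_taut_conseq [imps l f]); [|intros h [<-|[]]; exact T].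
  intros v. cbn [forallb]. rewrite andb_true_r, !beval_imps.
  destruct (forallb (beval v) l') eqn:E; [|reflexivity].
  now rewrite (forallb_beval_incl v l l' Hll' E).
Qed.

Lemma der_common_premises G l :
  (forall g, In g l -> der G g) ->
  exists L, (forall h, In h L -> G h) /\ forall g, In g l -> thm (imps L g).
Proof.
  intros Hl; induction l as [|g l IH].
  - exists []. split; intros _ [].
  - destruct (Hl g (or_introl eq_refl)) as [Lg [HLg Tg]].
    destruct IH as [L [HL TL]]; [intros h Hh; apply Hl; right; exact Hh|].
    exists (Lg ++ L). split.
    + intros h Hh. apply in_app_or in Hh. destruct Hh; auto.
    + intros h [<- | Hh]; [apply (thm_imps_weaken Lg) | apply (thm_imps_weaken L)];
        auto; intros k Hk; apply in_or_app; auto.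
Qed.

Lemma der_taut G l f :
  (forall v, forallb (beval v) l = true -> beval v f = true) ->
  (forall g, In g l -> der G g) -> der G f.
Proof.
  intros Hv Hl. destruct (@der_common_premises G l Hl) as [L [HL TL]].
  exists L. split; [exact HL|].
  apply (thm_taut_conseq (map (imps L) l)).
  - intros v Hv'. rewrite beval_imps.
    destruct (forallb (beval v) L) eqn:EL; [|reflexivity]. simpl.
    apply Hv, forallb_forall. intros g Hg. rewrite forallb_forall in Hv'.
    specialize (Hv' _ (in_map _ _ _ Hg)). now rewrite beval_imps, EL in Hv'.
  - intros h Hh. apply in_map_iff in Hh. destruct Hh as [g [<- Hg]]. auto.
Qed.

Lemma der_in G f : G f -> der G f.
Proof. intro H. exists [f]. split; [intros g [<-|[]]; exact H|]. apply ax_taut. solve_bool. Qed.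

Lemma der_thm G f : thm f -> der G f.
Proof. intro H. exists []. split; [intros g []|exact H]. Qed.

Lemma der_mono G G' f : (forall g, G g -> G' g) -> der G f -> der G' f.
Proof. intros HG [l [Hl T]]. exists l. auto. Qed.

Lemma der_empty f : der (fun _ => False) f -> thm f.
Proof. intros [[|g l] [Hl T]]; [exact T|]. destruct (Hl g (or_introl eq_refl)). Qed.

Lemma der_imp_of_extend G a f : der (extend G a) f -> der G (Imp a f).
Proof.
  intros [l [Hl T]].
  assert (Hsplit : exists l', (forall g, In g l' -> G g) /\
                              forall g, In g l -> In g l' \/ g = a).
  { clear T. induction l as [|g l IH].
    - exists []. split; intros _ [].
    - destruct IH as [l' [Hl' Hcov]]; [intros h Hh; apply Hl; right; exact Hh|].
      destruct (Hl g (or_introl eq_refl)) as [Gg | ->].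
      + exists (g :: l'). split; [intros h [<-|Hh]; auto|].
        intros h [<-|Hh]; [left; left; reflexivity|].
        destruct (Hcov h Hh); [left; right|right]; auto.
      + exists l'. split; [exact Hl'|]. intros h [<-|Hh]; auto. }
  destruct Hsplit as [l' [Hl' Hcov]]. exists l'. split; [exact Hl'|].
  apply (thm_taut_conseq [imps l f]); [|intros h [<-|[]]; exact T].
  intros v Hv. cbn [forallb] in Hv. rewrite andb_true_r, beval_imps in Hv.
  rewrite beval_imps, beval_imp.
  destruct (forallb (beval v) l') eqn:E', (beval v a) eqn:Ea; try reflexivity. simpl.
  enough (El : forallb (beval v) l = true) by (rewrite El in Hv; exact Hv).
  apply forallb_forall. intros g Hg. destruct (Hcov g Hg) as [Hg' | ->]; [|exact Ea].
  rewrite forallb_forall in E'. auto.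
Qed.

Lemma der_neg_of_inconsistent G a : ~ consistent (extend G a) -> der G (Neg a).
Proof.
  intro N. apply NNPP in N. apply der_imp_of_extend in N.
  apply (der_taut [Imp a bot]); [solve_bool|intros g [<-|[]]; exact N].
Qed.

Lemma der_of_inconsistent_neg G a : ~ consistent (extend G (Neg a)) -> der G a.
Proof.
  intro N. apply NNPP in N. apply der_imp_of_extend in N.
  apply (der_taut [Imp (Neg a) bot]); [solve_bool|intros g [<-|[]]; exact N].
Qed.

Lemma mcs_der G f : MCS G -> der G f -> G f.
Proof.
  intros [C M] D. destruct (M f) as [|N]; [assumption|]. exfalso. apply C.
  apply (der_taut [f; Neg f]); [solve_bool|].
  intros g [<-|[<-|[]]]; [exact D|apply der_in; exact N].
Qed.

Lemma mcs_thm G f : MCS G -> thm f -> G f.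
Proof. intros M T. exact (mcs_der M (der_thm G T)). Qed.

Lemma mcs_neg G f : MCS G -> G (Neg f) <-> ~ G f.
Proof.
  intros M. split.
  - intros N P. apply (proj1 M), (der_taut [f; Neg f]); [solve_bool|].
    intros g [<-|[<-|[]]]; apply der_in; assumption.
  - intros N. destruct (proj2 M f); tauto.
Qed.

Lemma mcs_conj G a b : MCS G -> G (Conj a b) <-> G a /\ G b.
Proof.
  intros M. split.
  - intros H. split; apply (mcs_der M), (der_taut [Conj a b]);
      solve [solve_bool | intros g [<-|[]]; apply der_in; exact H].
  - intros [Ha Hb]. apply (mcs_der M), (der_taut [a; b]); [solve_bool|].
    intros g [<-|[<-|[]]]; apply der_in; assumption.
Qed.

Lemma mcs_mp G a b : MCS G -> G (Imp a b) -> G a -> G b.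
Proof.
  intros M Hab Ha. apply (mcs_der M), (der_taut [Imp a b; a]); [solve_bool|].
  intros g [<-|[<-|[]]]; apply der_in; assumption.
Qed.
End Derivability.

Section Lindenbaum.
Context {Ag : Type}.
Variable enum : nat -> form Ag.
Hypothesis enum_surj : forall f, exists k, enum k = f.
Variable G : form Ag -> Prop.

Fixpoint lind_chain (n : nat) : form Ag -> Prop :=
  match n with
  | 0 => G
  | S n => fun g => lind_chain n g \/
      (g = enum n /\ consistent (extend (lind_chain n) (enum n))) \/
      (g = Neg (enum n) /\ ~ consistent (extend (lind_chain n) (enum n)))
  end.

Lemma lind_chain_mono n m g : n <= m -> lind_chain n g -> lind_chain m g.
Proof. induction 1; simpl; auto. Qed.

Lemma lind_chain_consistent n : consistent G -> consistent (lind_chain n).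
Proof.
  intro C. induction n as [|n IH]; [exact C|]. simpl.
  destruct (classic (consistent (extend (lind_chain n) (enum n)))) as [Cp | Cn].
  - intro D. apply Cp. revert D. apply der_mono.
    intros g [Hg | [[-> _] | [_ Hn]]]; [left; exact Hg | right; reflexivity | contradiction].
  - intro D. apply IH, (der_taut [enum n; Neg (enum n)]).
    + solve_bool.
    + intros g [<-|[<-|[]]].
      * apply der_of_inconsistent_neg. intro Cneg. apply Cneg. revert D. apply der_mono.
        intros g [Hg | [[_ Hp] | [-> _]]]; [left; exact Hg | contradiction | right; reflexivity].
      * exact (der_neg_of_inconsistent Cn).
Qed.

Lemma lind_chain_decides k : lind_chain (S k) (enum k) \/ lind_chain (S k) (Neg (enum k)).
Proof.
  simpl. destruct (classic (consistent (extend (lind_chain k) (enum k)))); tauto.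
Qed.

Lemma lind_chain_finite l :
  (forall g, In g l -> exists n, lind_chain n g) -> exists N, forall g, In g l -> lind_chain N g.
Proof.
  intro Hl; induction l as [|g l IH]; [exists 0; intros _ []|].
  destruct IH as [N HN]; [intros h Hh; apply Hl; right; exact Hh|].
  destruct (Hl g (or_introl eq_refl)) as [n Hn].
  exists (max N n). intros h [<-|Hh].
  - apply (@lind_chain_mono n); [lia|exact Hn].
  - apply (@lind_chain_mono N); [lia|auto].
Qed.

Lemma lindenbaum : consistent G -> exists D, MCS D /\ forall g, G g -> D g.
Proof.
  intro C. exists (fun g => exists n, lind_chain n g). split; [split|].
  - intros [l [Hl T]]. destruct (lind_chain_finite l Hl) as [N HN].
    apply (lind_chain_consistent N C). exists l. auto.
  - intros f. destruct (enum_surj f) as [k <-].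
    destruct (lind_chain_decides k); [left|right]; exists (S k); assumption.
  - intros g Hg. exists 0. exact Hg.
Qed.
End Lindenbaum.

Section NormalBox.
Context {Ag : Type}.
Variable B : form Ag -> form Ag.

Definition acc (x y : form Ag -> Prop) : Prop := forall a, x (B a) -> y a.

Hypothesis B_nec : forall a, thm a -> thm (B a).
Hypothesis B_K : forall a b, thm (Imp (B (Imp a b)) (Imp (B a) (B b))).

Lemma thm_imps_box l b : thm (imps l b) -> thm (imps (map B l) (B b)).
Proof.
  revert b; induction l as [|g l IH]; intros b T; [exact (B_nec T)|].
  assert (Tg : thm (imps l (Imp g b))).
  { apply (thm_taut_conseq [imps (g :: l) b]); [solve_bool|intros h [<-|[]]; exact T]. }
  apply (thm_taut_conseq
           [imps (map B l) (B (Imp g b)); Imp (B (Imp g b)) (Imp (B g) (B b))]).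
  - solve_bool.
  - intros h [<-|[<-|[]]]; [exact (IH _ Tg)|apply B_K].
Qed.

Lemma der_box x a : der (fun c => x (B c)) a -> der x (B a).
Proof.
  intros [l [Hl T]]. exists (map B l). split; [|apply thm_imps_box; exact T].
  intros g Hg. apply in_map_iff in Hg. destruct Hg as [h [<- Hh]]. auto.
Qed.

Lemma box_existence (enum : nat -> form Ag) x a :
  (forall f, exists k, enum k = f) -> MCS x -> ~ x (B a) ->
  exists y, MCS y /\ acc x y /\ ~ y a.
Proof.
  intros Henum Mx Na.
  assert (C : consistent (extend (fun c => x (B c)) (Neg a))).
  { intro D. apply Na, (mcs_der Mx), der_box, der_of_inconsistent_neg.
    intro C. exact (C D). }
  destruct (lindenbaum enum Henum C) as [y [My Hy]].
  exists y. split; [exact My|split].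
  - intros c Hc. apply Hy. left. exact Hc.
  - apply (mcs_neg a My). apply Hy. right. reflexivity.
Qed.
End NormalBox.

Section Accessibility.
Context {Ag : Type}.
Implicit Types (B : form Ag -> form Ag) (x y z : form Ag -> Prop).

Lemma acc_refl B x : (forall a, thm (Imp (B a) a)) -> MCS x -> acc B x x.
Proof. intros T Mx a Ha. exact (mcs_mp _ _ Mx (mcs_thm Mx (T a)) Ha). Qed.

Lemma acc_trans B x y z :
  (forall a, thm (Imp (B a) (B (B a)))) -> MCS x -> acc B x y -> acc B y z -> acc B x z.
Proof.
  intros T4 Mx Hxy Hyz a Ha. apply Hyz, Hxy. exact (mcs_mp _ _ Mx (mcs_thm Mx (T4 a)) Ha).
Qed.

Lemma acc_eucl B x y z :
  (forall a, thm (Imp (Neg (B a)) (B (Neg (B a))))) -> MCS x -> MCS y ->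
  acc B x y -> acc B x z -> acc B y z.
Proof.
  intros T5 Mx My Hxy Hxz a Ha. apply Hxz, NNPP. intro N.
  apply (mcs_neg (B a) Mx) in N.
  apply (mcs_neg (B a) My); [|exact Ha].
  apply Hxy. exact (mcs_mp _ _ Mx (mcs_thm Mx (T5 a)) N).
Qed.

Lemma acc_sub B B' x y :
  (forall a, thm (Imp (B a) (B' a))) -> MCS x -> acc B' x y -> acc B x y.
Proof. intros T Mx Hxy a Ha. apply Hxy. exact (mcs_mp _ _ Mx (mcs_thm Mx (T a)) Ha). Qed.
End Accessibility.

Section CanonicalModel.
Variable Ag : Type.

Record world := { wset :> form Ag -> Prop; wmcs : MCS wset }.

Definition int_open (U : world -> Prop) : Prop :=
  forall x y : world, U x -> acc (@Int Ag) x y -> U y.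

Lemma int_acc_refl (x : world) : acc (@Int Ag) x x.
Proof. apply acc_refl; [exact (@ax_intT Ag) | exact (wmcs x)]. Qed.

Lemma int_acc_trans {x y z : world} :
  acc (@Int Ag) x y -> acc (@Int Ag) y z -> acc (@Int Ag) x z.
Proof. apply acc_trans; [exact (@ax_int4 Ag) | exact (wmcs x)]. Qed.

Lemma K_acc_refl i (x : world) : acc (K i) x x.
Proof. apply acc_refl; [exact (ax_T i) | exact (wmcs x)]. Qed.

Lemma K_acc_trans {i} {x y z : world} : acc (K i) x y -> acc (K i) y z -> acc (K i) x z.
Proof. apply acc_trans; [exact (ax_4 i) | exact (wmcs x)]. Qed.

Lemma K_acc_sym {i} {x y : world} : acc (K i) x y -> acc (K i) y x.
Proof.
  intro Hxy. apply (acc_eucl (x := x)); [exact (ax_5 i) | exact (wmcs x) | exact (wmcs y) | ..].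
  - exact Hxy.
  - apply K_acc_refl.
Qed.

Lemma K_acc_of_int_acc i {x y : world} : acc (@Int Ag) x y -> acc (K i) x y.
Proof. apply acc_sub; [exact (ax_Kint i) | exact (wmcs x)]. Qed.

Definition canon_top : topology world.
Proof.
  refine {| opn := int_open |}.
  - intros U V HU HUV x y Vx Rxy. apply HUV, (HU x); [apply HUV|]; assumption.
  - intros x y _ _. exact I.
  - intros F HF x y [U [FU Ux]] Rxy. exists U. split; [exact FU|]. exact (HF U FU x y Ux Rxy).
  - intros U V HU HV x y [Ux Vx] Rxy. split; [exact (HU x y Ux Rxy) | exact (HV x y Vx Rxy)].
Defined.

Definition canon_pfun (U : world -> Prop) : pfun Ag world :=
  {| dom := U; nb := fun x i y => acc (K i) x y /\ U y |}.

Definition canon_Phi (th : pfun Ag world) : Prop := exists U, int_open U /\ th = canon_pfun U.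

Lemma canon_nfs : nfs canon_top canon_Phi.
Proof.
  intros th [U [HU ->]]. split.
  - intros x i Ux. cbn. split; [|split; [|split]].
    + intros y z [Hxy Uy] Hyz.
      split; [exact (K_acc_trans Hxy (K_acc_of_int_acc i Hyz)) | exact (HU y z Uy Hyz)].
    + split; [apply K_acc_refl | exact Ux].
    + intros y [_ Uy]. exact Uy.
    + intros y _ [Hxy _] z. split; intros [H Uz]; split; try exact Uz.
      * exact (K_acc_trans (K_acc_sym Hxy) H).
      * exact (K_acc_trans Hxy H).
  - intros V HV. exists (canon_pfun (fun x => U x /\ V x)). split.
    + exists (fun x => U x /\ V x). split; [|reflexivity].
      intros x y [Ux Vx] Rxy. split; [exact (HU x y Ux Rxy) | exact (HV x y Vx Rxy)].
    + split; cbn; intros; tauto.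
Qed.

Definition canon_model : topo_model Ag :=
  {| carrier := world; top := canon_top; Phi := canon_Phi; Phi_nfs := canon_nfs;
     val := fun p x => x (Var p) |}.

Definition canon_full : pfun Ag world := canon_pfun (fun _ => True).

Lemma canon_full_Phi : canon_Phi canon_full.
Proof. exists (fun _ => True). split; [intros x y _ _; exact I | reflexivity]. Qed.

Lemma truth_lemma (enum : nat -> form Ag) (enum_surj : forall f, exists k, enum k = f) :
  forall f (x : world), sat canon_model canon_full f x <-> x f.
Proof.
  induction f as [p | a IH | a IHa b IHb | i a IH | a IH]; intro x; cbn.
  - reflexivity.
  - rewrite IH. symmetry. exact (mcs_neg a (wmcs x)).
  - rewrite IHa, IHb. symmetry. exact (mcs_conj a b (wmcs x)).
  - split.
    + intro H. apply NNPP. intro N.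
      destruct (box_existence (K i) (@r_necK _ i) (@ax_K _ i) enum a enum_surj (wmcs x) N)
        as [y [My [Hxy Ny]]].
      apply Ny, (IH (Build_world My)), H. split; [exact Hxy | exact I].
    + intros H y [Hxy _]. apply IH, Hxy, H.
  - split.
    + intros [U [HU [Ux HUa]]]. apply NNPP. intro N.
      destruct (box_existence (@Int Ag) (@r_necInt _) (@ax_intK _) enum a enum_surj
                              (wmcs x) N)
        as [y [My [Hxy Ny]]].
      apply Ny, (IH (Build_world My)), (HUa (Build_world My)), (HU x); assumption.
    + intro H. exists (acc (@Int Ag) x). split; [|split].
      * intros y z Hxy Hyz. exact (int_acc_trans Hxy Hyz).
      * apply int_acc_refl.
      * intros y Hxy. split; [exact I|]. apply IH, Hxy, H.
Qed.
End CanonicalModel.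

Section Enumeration.
Context {Ag : Type}.
Variable agents : list Ag.
Hypothesis agents_all : forall i, In i agents.

Fixpoint formulas_upto (n : nat) : list (form Ag) :=
  match n with
  | 0 => []
  | S n => let F := formulas_upto n in
      F ++ Var n :: map (@Neg Ag) F ++ flat_map (fun a => map (Conj a) F) F ++
      flat_map (fun i => map (K i) F) agents ++ map (@Int Ag) F
  end.

Lemma formulas_upto_mono n m f : n <= m -> In f (formulas_upto n) -> In f (formulas_upto m).
Proof. induction 1 as [|m _ IH]; [tauto|]. intro Hf. cbn. apply in_or_app. auto. Qed.

Lemma formulas_upto_exhaustive f : exists n, In f (formulas_upto n).
Proof.
  induction f as [p | a [n Hn] | a [n Hn] b [m Hm] | i a [n Hn] | a [n Hn]];
    [exists (S p) | exists (S n) | exists (S (max n m)) | exists (S n) | exists (S n)];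
    cbn; rewrite in_app_iff; right; [apply in_eq | ..]; apply in_cons; rewrite !in_app_iff.
  - left. apply in_map, Hn.
  - right. left. apply in_flat_map. exists a. split.
    + apply (formulas_upto_mono (n := n)); [lia | exact Hn].
    + apply in_map, (formulas_upto_mono (n := m)); [lia | exact Hm].
  - right. right. left. apply in_flat_map. exists i. split; [apply agents_all | apply in_map, Hn].
  - right. right. right. apply in_map, Hn.
Qed.

Definition form_enum (k : nat) : form Ag :=
  let (n, j) := of_nat k in nth j (formulas_upto n) (Var 0).

Lemma form_enum_surj f : exists k, form_enum k = f.
Proof.
  destruct (formulas_upto_exhaustive f) as [n Hn].
  destruct (In_nth _ _ (Var 0) Hn) as [j [_ Hj]].
  exists (to_nat (n, j)). unfold form_enum. rewrite cancel_of_to. exact Hj.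
Qed.
End Enumeration.

Theorem theorem2 (Ag : Type) (Ag_finite : exists l : list Ag, forall i, In i l)
    (Ag_nonempty : inhabited Ag) (phi : form Ag) :
  (forall M : topo_model Ag, valid M phi) -> thm phi.
Proof.
  intros Hvalid. destruct Ag_finite as [agents agents_all].
  pose proof (form_enum_surj _ agents_all) as enum_surj.
  apply NNPP. intro Nphi.
  assert (C : consistent (extend (fun _ => False) (Neg phi))).
  { intro D. apply Nphi, der_empty, der_of_inconsistent_neg. intro C. exact (C D). }
  destruct (lindenbaum _ enum_surj C) as [D [MD HD]].
  assert (Dphi : D phi).
  { apply (truth_lemma _ enum_surj phi (Build_world MD)).
    apply Hvalid; [exact (canon_full_Phi Ag) | exact I]. }
  apply (mcs_neg phi MD); [apply HD; right; reflexivity | exact Dphi].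
Qed.
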